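(* Consider online convex optimization over a convex set $\Omega\subseteq\mathbb{R}^d$ for $T$ rounds: in round $t$ the learner plays $\mathbf{w}_t\in\Omega$, after which a convex loss $f_t:\Omega\to\mathbb{R}$ is revealed. Assume every $f_t$ is $G$-Lipschitz continuous on $\Omega$ (with respect to $\|\cdot\|_2$). Then for every comparator sequence $\mathbf{u}_1,\ldots,\mathbf{u}_T\in\Omega$, \[ \sum_{t=1}^T f_t(\mathbf{w}_t)-\sum_{t=1}^T f_t(\mathbf{u}_t)\;\le\;\min_{I_1,\ldots,I_k}\sum_{i=1}^k\Big(\mathrm{SAReg}(T,|I_i|)+G\,|I_i|\,P_T(i)\Big), \] where the minimum ranges over all partitions of $[1,T]$ into consecutive intervals $I_1=[s_1,q_1],\ldots,I_k=[s_k,q_k]$, and $P_T(i)=\sum_{t=s_i}^{q_i-1}\|\mathbf{u}_{t+1}-\mathbf{u}_t\|_2$. Moreover, suppose in addition that $\Omega$ has diameter at most $D$ and $\|\nabla f_t(\mathbf{w})\|_2\le G$ for all $\mathbf{w}\in\Omega$, $t\in[T]$, and that the learner is the sleeping coin betting meta-algorithm of Jun et al. (2017) run with online gradient descent experts, so that its strongly adaptive regret satisfies $\mathrm{SAReg}(T,\tau)\le\big(\tfrac{4DG}{\sqrt2-1}+8\sqrt{7\log T+5}\big)\sqrt{\tau}$ for all $\tau$. Then for every comparator sequence, \[ \sum_{t=1}^T f_t(\mathbf{w}_t)-\sum_{t=1}^T f_t(\mathbf{u}_t)=O\Big(\max\big\{\sqrt{T\log T},\;T^{2/3}P_T^{1/3}\log^{1/3}T\big\}\Big),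 \] where $P_T=\sum_{t=1}^{T}\|\mathbf{u}_{t+1}-\mathbf{u}_t\|_2$ is the path-length and the constant in $O(\cdot)$ depends only on $D$ and $G$.
   Context: The strongly adaptive regret of the learner's plays $\mathbf{w}_1,\ldots,\mathbf{w}_T$ is $\mathrm{SAReg}(T,\tau)=\max_{[s,s+\tau-1]\subseteq[T]}\Big(\sum_{t=s}^{s+\tau-1}f_t(\mathbf{w}_t)-\min_{\mathbf{w}\in\Omega}\sum_{t=s}^{s+\tau-1}f_t(\mathbf{w})\Big)$. The left-hand side $\sum_t f_t(\mathbf{w}_t)-\sum_t f_t(\mathbf{u}_t)$ is called the dynamic regret with respect to $\mathbf{u}_1,\ldots,\mathbf{u}_T$. *)

From HB Require Import structures.
From mathcomp Require Import all_boot all_order all_algebra.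
From mathcomp Require Import all_classical all_reals all_analysis.
Set Implicit Arguments. Unset Strict Implicit. Unset Printing Implicit Defensive.
Import Order.TTheory GRing.Theory Num.Theory.
Local Open Scope classical_set_scope.
Local Open Scope ring_scope.

Section Defs.
Variable R : realType.
Variable d : nat.
Local Notation V := 'rV[R]_d.

Definition norm2 (x : V) : R := Num.sqrt (\sum_(i < d) x 0 i ^+ 2).

Definition oco_convex_set (Om : set V) : Prop :=
  forall x y, Om x -> Om y -> forall l : R, 0 <= l <= 1 ->
    Om (l *: x + (1 - l) *: y).

Definition oco_convex_fun (Om : set V) (f : V -> R) : Prop :=
  forall x y, Om x -> Om y -> forall l : R, 0 <= l <= 1 ->
    f (l *: x + (1 - l) *: y) <= l * f x + (1 - l) * f y.

Definition oco_lipschitz (Om : set V) (G : R) (f : V -> R) : Prop :=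
  forall x y, Om x -> Om y -> `|f x - f y| <= G * norm2 (x - y).

Definition oco_diam_le (Om : set V) (D : R) : Prop :=
  forall x y, Om x -> Om y -> norm2 (x - y) <= D.

(* Strongly adaptive regret SAReg(T, tau) of the plays w_1..w_T
   (rounds indexed 1..T), with values in the extended reals
   (the inner minimum over Om is an infimum, possibly -oo). *)
Definition SAReg (Om : set V) (f : nat -> V -> R) (w : nat -> V)
    (T tau : nat) : \bar R :=
  ereal_sup [set ((\sum_(s <= t < s + tau) f t (w t))%:E
                   - ereal_inf [set (\sum_(s <= t < s + tau) f t x)%:E
                               | x in Om])%E
            | s in [set s : nat | (1 <= s)%N /\ (s + tau <= T.+1)%N]].

Definition dyn_regret (f : nat -> V -> R) (w u : nat -> V) (T : nat) : R :=
  \sum_(1 <= t < T.+1) f t (w t) - \sum_(1 <= t < T.+1) f t (u t).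

(* A partition of [1,T] into k consecutive nonempty intervals
   I_i = [s i, s (i+1) - 1], i < k. *)
Definition interval_partition (T k : nat) (s : nat -> nat) : Prop :=
  s 0%N = 1%N /\ s k = T.+1 /\ (forall i, (i < k)%N -> (s i < s i.+1)%N).

Definition path_len (u : nat -> V) (a b : nat) : R :=
  \sum_(a <= t < b) norm2 (u t.+1 - u t).

End Defs.

From HB Require Import structures.
From mathcomp Require Import all_boot all_order all_algebra.
From mathcomp Require Import all_classical all_reals all_analysis.
From mathcomp Require Import zify ring lra.
Set Implicit Arguments.
Unset Strict Implicit.
Unset Printing Implicit Defensive.
Import Order.TTheory GRing.Theory Num.Theory.
Local Open Scope classical_set_scope.
Local Open Scope ring_scope.

(* On an interval I = [a, b] of a partition, compare with the fixed point u_a: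
   the regret against u_a is at most SAReg(T, |I|), and walking from u_a to u_t
   along the comparators shows, by Lipschitz continuity, that
   f_t(u_a) - f_t(u_t) is at most G times the path length of u on [a, b].
   Summing over the intervals gives the first bound.
   For the rate, cut [1, T] into ceil(T / tau) blocks of length at most tau:
   the regret is then at most A sqrt(tau) (T / tau + 1) + tau G P_T with
   A = O(sqrt(ln T)).  Depending on the size of P_T, the choice tau = T, tau = 1
   or tau ~ (T^2 ln T / P_T^2)^(1/3) gives a constant times
   max(sqrt(T ln T), W), where W = T^(2/3) P_T^(1/3) (ln T)^(1/3) is
   handled through W^3 = T^2 P_T ln T. *)

Lemma leq_cuts k (s : nat -> nat) :
  (forall i, (i < k)%N -> (s i <= s i.+1)%N) ->
  forall i j, (i <= j <= k)%N -> (s i <= s j)%N.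
Proof.
move=> sinc i j /andP[+ jk]; elim: j jk => [|j IH] jk.
  by rewrite leqn0 => /eqP ->.
rewrite leq_eqVlt => /orP[/eqP -> // | ij].
exact: leq_trans (IH (ltnW jk) ij) (sinc _ jk).
Qed.

Lemma big_nat_cuts (V : nmodType) (F : nat -> V) k (s : nat -> nat) :
  (forall i, (i < k)%N -> (s i <= s i.+1)%N) ->
  \sum_(s 0%N <= t < s k) F t = \sum_(i < k) \sum_(s i <= t < s i.+1) F t.
Proof.
elim: k => [|k IH] sinc; first by rewrite big_geq // big_ord0.
rewrite big_ord_recr /= -IH => [|i ik]; last exact/sinc/ltnW.
rewrite -big_cat_nat ?sinc //.
by rewrite (leq_cuts sinc) ?leq0n ?leqnSn.
Qed.

Lemma subr_le_sum_dist (R : realDomainType) (g : nat -> R) a b c :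
  (a <= b <= c)%N -> g a - g b <= \sum_(a <= j < c) `|g j.+1 - g j|.
Proof.
case/andP=> ab bc.
have -> : g a - g b = \sum_(a <= j < b) (g j - g j.+1).
  by rewrite -opprB -telescope_sumr // -sumrN; apply: eq_bigr => j _; rewrite opprB.
rewrite (big_cat_nat ab bc) /= -[leLHS]addr0.
apply: lerD; last exact: sumr_ge0.
by apply: ler_sum => j _; rewrite distrC ler_norm.
Qed.

Section PathLength.
Variables (R : realType) (d : nat) (u : nat -> 'rV[R]_d).

Lemma path_len_ge0 a b : 0 <= path_len u a b.
Proof. by apply: sumr_ge0 => j _; apply: sqrtr_ge0. Qed.

Lemma path_len_cat a b c : (a <= b <= c)%N ->
  path_len u a c = path_len u a b + path_len u b c.
Proof. by case/andP=> ab bc; rewrite /path_len (big_cat_nat ab bc). Qed.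

Lemma path_len_predD_le a b c : (a <= b <= c)%N ->
  path_len u a b.-1 + path_len u b c <= path_len u a c.
Proof.
case/andP; rewrite leq_eqVlt => /orP[/eqP <- _|ltab bc].
  by rewrite [path_len u a a.-1]big_geq ?leq_pred // add0r.
have abc : (a <= b.-1 <= c)%N by apply/andP; split; lia.
rewrite [path_len u a c](path_len_cat abc) lerD2l.
rewrite [path_len u b.-1 c]big_ltn; last by lia.
by rewrite prednK ?lerDr ?sqrtr_ge0 //; lia.
Qed.

Lemma path_len_cuts_le k (s : nat -> nat) :
  (forall i, (i < k)%N -> (s i < s i.+1)%N) ->
  \sum_(i < k) path_len u (s i) (s i.+1).-1 <= path_len u (s 0%N) (s k).-1.
Proof.
elim: k => [|k IH] sinc; first by rewrite big_ord0 path_len_ge0.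
rewrite big_ord_recr /=.
apply: le_trans (path_len_predD_le (b := s k) _); last first.
  apply/andP; split; last by have := sinc k (ltnSn k); lia.
  by rewrite (leq_cuts (k := k.+1)) ?leq0n ?leqnSn // => i /sinc/ltnW.
by rewrite lerD2r; apply: IH => i ik; apply: sinc; apply: ltnW.
Qed.

End PathLength.

Lemma static_regret_le_SAReg (R : realType) d (Om : set 'rV[R]_d)
    (f : nat -> 'rV[R]_d -> R) (w : nat -> 'rV[R]_d) T a b x :
  (1 <= a <= b)%N -> (b <= T.+1)%N -> Om x ->
  ((\sum_(a <= t < b) (f t (w t) - f t x))%:E <= SAReg Om f w T (b - a))%E.
Proof.
move=> /andP[a1 ab] bT Omx; have ab_eq := subnKC ab.
apply: ereal_sup_ge; eexists; first by exists a; first by rewrite /= ab_eq.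
rewrite ab_eq sumrB EFinB leeB // ereal_inf_le //.
by exists (\sum_(a <= t < b) f t x)%:E => //; exists x.
Qed.

Section DynamicRegret.
Variables (R : realType) (d : nat) (Om : set 'rV[R]_d) (G : R) (T : nat).
Variables (f : nat -> 'rV[R]_d -> R) (w u : nat -> 'rV[R]_d).
Hypothesis f_lipschitz : forall t, (1 <= t <= T)%N -> oco_lipschitz Om G (f t).
Hypothesis u_in : forall t, (1 <= t <= T)%N -> Om (u t).

Lemma comparator_drift_le t a b c : (1 <= a)%N -> (a <= b <= c)%N ->
  (c <= T)%N -> (1 <= t <= T)%N ->
  f t (u a) - f t (u b) <= G * path_len u a c.
Proof.
move=> a1 abc cT tT.
apply: le_trans (subr_le_sum_dist (fun j => f t (u j)) abc) _.
rewrite /path_len mulr_sumr; apply: ler_sum_nat => j /andP[aj jc].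
by apply: f_lipschitz => //; apply: u_in; lia.
Qed.

Lemma block_regret_le a b : (1 <= a < b)%N -> (b <= T.+1)%N ->
  ((\sum_(a <= t < b) (f t (w t) - f t (u t)))%:E <=
   SAReg Om f w T (b - a) + (G * (b - a)%:R * path_len u a b.-1)%:E)%E.
Proof.
move=> /andP[a1 ab] bT.
have drift : \sum_(a <= t < b) (f t (u a) - f t (u t))
             <= G * (b - a)%:R * path_len u a b.-1.
  rewrite mulrAC mulr_natr -sumr_const_nat.
  by apply: ler_sum_nat => t /andP[ta tb]; apply: comparator_drift_le; lia.
have -> : \sum_(a <= t < b) (f t (w t) - f t (u t)) =
    \sum_(a <= t < b) (f t (w t) - f t (u a))
    + \sum_(a <= t < b) (f t (u a) - f t (u t)).
  by rewrite -big_split; apply: eq_bigr => t _ /=; rewrite addrA subrK.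
rewrite EFinD leeD // ?lee_fin //.
by apply: static_regret_le_SAReg; [lia | lia | apply: u_in; lia].
Qed.

Lemma dynamic_regret_le_partition k s : interval_partition T k s ->
  ((dyn_regret f w u T)%:E <=
   \sum_(i < k) (SAReg Om f w T (s i.+1 - s i)
                 + (G * (s i.+1 - s i)%:R * path_len u (s i) (s i.+1).-1)%:E))%E.
Proof.
move=> [s0 [sk sinc]].
have cut_in i : (i < k)%N -> (1 <= s i)%N /\ (s i.+1 <= T.+1)%N.
  move=> ik; rewrite -s0 -sk !(leq_cuts (fun j jk => ltnW (sinc j jk))) //.
    by rewrite ik leqnn.
  by rewrite leq0n (ltnW ik).
rewrite /dyn_regret -sumrB -[in X in X%:E]s0 -sk.
rewrite (big_nat_cuts _ (fun j jk => ltnW (sinc j jk))) -sumEFin.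
apply: lee_sum => i _; have [si1 siT] := cut_in i (ltn_ord i).
by apply: block_regret_le; rewrite ?si1 ?sinc.
Qed.

End DynamicRegret.

Definition uniform_cuts (T tau i : nat) : nat := minn (1 + i * tau) T.+1.

(* ceil(T / tau) when T > 0 *)
Definition uniform_count (T tau : nat) : nat := (T.-1 %/ tau).+1.

Lemma uniform_cuts_partition T tau : (0 < T)%N -> (0 < tau)%N ->
  interval_partition T (uniform_count T tau) (uniform_cuts T tau).
Proof.
move=> T0 tau0; rewrite /uniform_cuts /uniform_count; split; [|split].
- by rewrite mul0n addn0; apply/minn_idPl.
- by have := ltn_ceil T.-1 tau0; move=> ?; apply/minn_idPr; lia.
- move=> i ik; have := leq_divM T.-1 tau.
  have : (i * tau <= T.-1 %/ tau * tau)%N by rewrite leq_mul2r -ltnS ik orbT.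
  by rewrite mulSn; lia.
Qed.

Lemma uniform_cuts_width T tau i :
  (uniform_cuts T tau i.+1 - uniform_cuts T tau i <= tau)%N.
Proof. by rewrite /uniform_cuts mulSn; lia. Qed.

Lemma uniform_count_le (R : realFieldType) T tau : (0 < tau)%N ->
  (uniform_count T tau)%:R <= T%:R / tau%:R + 1 :> R.
Proof.
move=> tau0; rewrite /uniform_count -natr1 lerD2r ler_pdivlMr ?ltr0n //.
by rewrite -natrM ler_nat (leq_trans (leq_divM _ _)) ?leq_pred.
Qed.

Section UniformBlocks.
Variables (R : realType) (d : nat) (Om : set 'rV[R]_d) (G : R) (T : nat).
Variables (f : nat -> 'rV[R]_d -> R) (w u : nat -> 'rV[R]_d).
Hypothesis f_lipschitz : forall t, (1 <= t <= T)%N -> oco_lipschitz Om G (f t).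
Hypothesis u_in : forall t, (1 <= t <= T)%N -> Om (u t).
Variable A : R.
Hypothesis A_ge0 : 0 <= A.
Hypothesis SAReg_le : forall m, (SAReg Om f w T m <= (A * Num.sqrt m%:R)%:E)%E.

Lemma dynamic_regret_le_uniform tau : (0 < T)%N -> (0 < tau)%N ->
  dyn_regret f w u T <=
  A * Num.sqrt tau%:R * (T%:R / tau%:R + 1) + tau%:R * (`|G| * path_len u 1 T).
Proof.
move=> T0 tau0; have part := uniform_cuts_partition T0 tau0.
set s := uniform_cuts T tau in part *; set k := uniform_count T tau in part *.
have block i : ((SAReg Om f w T (s i.+1 - s i)
                 + (G * (s i.+1 - s i)%:R * path_len u (s i) (s i.+1).-1)%:E)
               <= (A * Num.sqrt tau%:R
                   + tau%:R * (`|G| * path_len u (s i) (s i.+1).-1))%:E)%E.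
  have width : (s i.+1 - s i)%:R <= tau%:R :> R.
    by rewrite ler_nat uniform_cuts_width.
  rewrite EFinD leeD // ?lee_fin.
    apply: le_trans (SAReg_le _) _; rewrite lee_fin ler_wpM2l // ler_sqrt //.
  rewrite mulrA [tau%:R * _]mulrC ler_wpM2r ?path_len_ge0 //.
  by rewrite (le_trans (ler_wpM2r (ler0n _ _) (ler_norm G))) ?ler_wpM2l.
have := le_trans (dynamic_regret_le_partition w f_lipschitz u_in part)
                 (lee_sum _ (fun i : 'I_k => fun _ => block i)).
rewrite sumEFin lee_fin big_split /= sumr_const card_ord -[_ *+ k]mulr_natr.
rewrite -mulr_sumr -mulr_sumr.
move/le_trans; apply; case: part => [s0 [sk sinc]].
apply: lerD; first by rewrite ler_wpM2l ?mulr_ge0 ?sqrtr_ge0 ?uniform_count_le.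
apply: ler_wpM2l; first exact: ler0n.
apply: ler_wpM2l; first exact: normr_ge0.
by have := path_len_cuts_le u sinc; rewrite s0 sk.
Qed.

End UniformBlocks.

Lemma ler_cube (R : realDomainType) (x y : R) : 0 <= x -> 0 <= y ->
  (x ^+ 3 <= y ^+ 3) = (x <= y).
Proof. by move=> x0 y0; rewrite ler_pXn2r. Qed.

Lemma tradeoff_small_path (R : rcfType) (T L P g K A Reg : R) :
  0 < T -> 0 <= P -> 0 <= g -> 0 <= A -> A <= K * Num.sqrt L ->
  T * P ^+ 2 <= L -> Reg <= 4 * A * T / Num.sqrt T + T * (g * P) ->
  Reg <= (4 * K + g) * Num.sqrt (T * L).
Proof.
move=> T_gt0 P_ge0 g_ge0 A_ge0 A_le TP_le Reg_le.
have sqrtT_gt0 : 0 < Num.sqrt T by rewrite sqrtr_gt0.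
have TP_sqrt : T * P <= Num.sqrt (T * L).
  rewrite -[T * P]ger0_norm ?mulr_ge0 ?(ltW T_gt0) // -sqrtr_sqr ler_sqrt; nra.
have A_sqrt : A * Num.sqrt T <= K * Num.sqrt (T * L).
  by rewrite sqrtrM ?(ltW T_gt0) // mulrCA mulrC ler_pM2l.
have sqrtT_div : 4 * A * T / Num.sqrt T = 4 * (A * Num.sqrt T).
  by rewrite -{1}[T](sqr_sqrtr (ltW T_gt0)); field; rewrite gt_eqF.
rewrite sqrtT_div in Reg_le; nra.
Qed.

Lemma tradeoff_large_path (R : rcfType) (T L P g D K A W Reg : R) :
  0 < T -> 1 <= L -> 0 <= g -> 0 <= A -> A <= K * Num.sqrt L -> P <= D * T ->
  0 <= W -> W ^+ 3 = T ^+ 2 * P * L -> T * Num.sqrt L <= P ->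
  Reg <= 4 * A * T + g * P -> Reg <= (4 * K + g * D) * W.
Proof.
move=> T_gt0 L_ge1 g_ge0 A_ge0 A_le P_le W_ge0 W_cube TL_le Reg_le.
have sqrtL_ge1 : 1 <= Num.sqrt L by rewrite -sqrtr1 ler_sqrt //; lra.
have sqrtL_sq : Num.sqrt L ^+ 2 = L by rewrite sqr_sqrtr //; lra.
have TL_W : T * Num.sqrt L <= W.
  rewrite -ler_cube ?W_cube ?mulr_ge0 //; try lra.
  have -> : (T * Num.sqrt L) ^+ 3 = T ^+ 2 * L * (T * Num.sqrt L).
    by rewrite -{2}sqrtL_sq; ring.
  rewrite [leRHS]mulrAC ler_pM2l //; nra.
have K_ge0 : 0 <= K by nra.
have D_ge0 : 0 <= D by nra.
have AT_le : A * T <= K * W.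
  apply: le_trans (ler_wpM2r (ltW T_gt0) A_le) _.
  by rewrite -mulrA [Num.sqrt L * T]mulrC; apply: ler_wpM2l.
have P_le_W : P <= D * W.
  apply: (le_trans P_le); apply: ler_wpM2l => //; apply: le_trans TL_W; nra.
nra.
Qed.

Lemma tradeoff_balanced (R : rcfType) (T L P g K A W Reg : R) :
  0 < T -> 0 < L -> 0 <= P -> 0 <= g -> 0 <= A -> A <= K * Num.sqrt L ->
  0 <= W -> W ^+ 3 = T ^+ 2 * P * L -> L < T * P ^+ 2 -> P < T * Num.sqrt L ->
  (forall x, 1 <= x <= T -> Reg <= 4 * A * T / Num.sqrt x + x * (g * P)) ->
  Reg <= (4 * K + g) * W.
Proof.
move=> T_gt0 L_gt0 P_ge0 g_ge0 A_ge0 A_le W_ge0 W_cube L_lt P_lt Reg_le.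
have P_gt0 : 0 < P.
  rewrite lt_neqAle P_ge0 andbT; apply/eqP => P0.
  by move: L_lt; rewrite -P0 expr0n mulr0 ltNge (ltW L_gt0).
have W_gt0 : 0 < W.
  rewrite lt_neqAle W_ge0 andbT; apply/eqP => W0.
  have : 0 < T ^+ 2 * P * L by rewrite !mulr_gt0 ?exprn_gt0.
  by rewrite -W_cube -W0 expr0n ltxx.
have P_sq : P ^+ 2 <= T ^+ 2 * L.
  rewrite -[L](sqr_sqrtr (ltW L_gt0)) -exprMn lerXn2r ?nnegrE ?(ltW P_lt) //.
  by rewrite mulr_ge0 ?sqrtr_ge0 ?(ltW T_gt0).
(* x = (T^2 L / P^2)^(1/3) balances the two terms of the regret bound. *)
set x := W / P.
have xP : x * P = W by rewrite /x divfK ?gt_eqF.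
have x_ge1 : 1 <= x.
  rewrite /x ler_pdivlMr // mul1r -ler_cube // W_cube [leRHS]mulrAC exprSr.
  exact: ler_wpM2r.
have x_leT : x <= T.
  rewrite /x ler_pdivrMr // -ler_cube ?mulr_ge0 ?(ltW T_gt0) ?(ltW P_gt0) //.
  have -> : (T * P) ^+ 3 = T ^+ 2 * P * (T * P ^+ 2) by ring.
  by rewrite W_cube ler_pM2l ?(ltW L_lt) // mulr_gt0 ?exprn_gt0.
have x_sqrt : T * Num.sqrt L = W * Num.sqrt x.
  have Wx : W ^+ 2 * x = T ^+ 2 * L.
    by rewrite /x mulrA -exprSr W_cube; field; rewrite gt_eqF.
  rewrite -[W]ger0_norm // -[T]ger0_norm ?(ltW T_gt0) // -!sqrtr_sqr.
  by rewrite -!sqrtrM ?sqr_ge0 // Wx.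
have sqrtx_gt0 : 0 < Num.sqrt x by rewrite sqrtr_gt0 (lt_le_trans ltr01).
have AT_le : 4 * A * T / Num.sqrt x <= 4 * K * W.
  rewrite ler_pdivrMr // -!mulrA; apply: ler_wpM2l => //.
  by rewrite -x_sqrt mulrCA [A * T]mulrC ler_pM2l.
apply: le_trans (Reg_le x _) _; first by rewrite x_ge1 x_leT.
by rewrite mulrCA xP [leRHS]mulrDl lerD2r.
Qed.

Lemma regret_le_window (R : realType) (T : nat) (A Q Reg : R) :
  0 <= A -> 0 <= Q ->
  (forall tau : nat, (0 < tau)%N ->
     Reg <= A * Num.sqrt tau%:R * (T%:R / tau%:R + 1) + tau%:R * Q) ->
  forall x, 1 <= x <= T%:R -> Reg <= 4 * A * T%:R / Num.sqrt x + x * Q.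
Proof.
move=> A_ge0 Q_ge0 Reg_le x /andP[x_ge1 x_leT].
have x_gt0 : 0 < x by apply: lt_le_trans x_ge1.
set tau := Num.truncn x.
have tau_gt0 : (0 < tau)%N by rewrite truncn_ge_nat ?(ltW x_gt0).
have tau_le_x : tau%:R <= x by rewrite truncn_le (ltW x_gt0).
have x_lt : x < 2 * tau%:R.
  apply: lt_le_trans (truncnS_gt x) _.
  by rewrite -natr1 mulr2n mulrDl mul1r lerD2l ler1n.
apply: le_trans (Reg_le tau tau_gt0) _; apply: lerD; last exact: ler_wpM2r.
have -> : 4 * A * T%:R / Num.sqrt x = A * (4 * T%:R / Num.sqrt x).
  by rewrite !mulrA [4 * A]mulrC.
rewrite -mulrA; apply: ler_wpM2l => //.
set r := Num.sqrt tau%:R.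
have r_gt0 : 0 < r by rewrite sqrtr_gt0 ltr0n.
have r_sq : r ^+ 2 = tau%:R by rewrite sqr_sqrtr.
have r_le : r <= T%:R / r.
  by rewrite ler_pdivlMr // -expr2 r_sq (le_trans tau_le_x).
have sqrtx_le : Num.sqrt x <= 2 * r.
  rewrite -[2 * r]ger0_norm ?mulr_ge0 ?(ltW r_gt0) //.
  rewrite -sqrtr_sqr ler_sqrt ?sqr_ge0 //.
  rewrite exprMn r_sq; apply: (le_trans (ltW x_lt)); apply: ler_wpM2r => //; lra.
have -> : r * (T%:R / tau%:R + 1) = T%:R / r + r.
  by rewrite -r_sq; field; rewrite gt_eqF.
apply: le_trans (_ : _ <= 2 * (T%:R / r)) _; first lra.
rewrite ler_pdivlMr ?sqrtr_gt0 //.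
apply: le_trans (ler_wpM2l _ sqrtx_le) _.
  by rewrite mulr_ge0 ?divr_ge0 ?ler0n ?(ltW r_gt0).
by rewrite le_eqVlt (_ : _ * (2 * r) = 4 * T%:R) ?eqxx //; field; rewrite gt_eqF.
Qed.

Lemma regret_tradeoff (R : realType) (T : nat) (L P g D K A W Reg : R) :
  (0 < T)%N -> 1 <= L -> 0 <= P -> P <= D * T%:R -> 0 <= g ->
  0 <= A -> A <= K * Num.sqrt L ->
  0 <= W -> W ^+ 3 = T%:R ^+ 2 * P * L ->
  (forall tau : nat, (0 < tau)%N ->
     Reg <= A * Num.sqrt tau%:R * (T%:R / tau%:R + 1) + tau%:R * (g * P)) ->
  Reg <= (4 * K + g + g * D) * Num.max (Num.sqrt (T%:R * L)) W.
Proof.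
move=> T_gt0 L_ge1 P_ge0 P_le g_ge0 A_ge0 A_le W_ge0 W_cube Reg_le.
have TR_gt0 : 0 < T%:R :> R by rewrite ltr0n.
have window := regret_le_window A_ge0 (mulr_ge0 g_ge0 P_ge0) Reg_le.
have sqrtL_ge1 : 1 <= Num.sqrt L by rewrite -sqrtr1 ler_sqrt //; lra.
have K_ge0 : 0 <= K by nra.
have D_ge0 : 0 <= D by nra.
have C_ge c : 0 <= c -> c <= 4 * K + g + g * D ->
    forall y, 0 <= y -> y <= Num.max (Num.sqrt (T%:R * L)) W ->
    c * y <= (4 * K + g + g * D) * Num.max (Num.sqrt (T%:R * L)) W.
  by move=> c_ge0 c_le y y_ge0 y_le; apply: ler_pM.
have gD_ge0 : 0 <= g * D by rewrite mulr_ge0.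
case: (lerP (T%:R * P ^+ 2) L) => [small|L_lt].
  apply: le_trans (tradeoff_small_path TR_gt0 P_ge0 g_ge0 A_ge0 A_le small _) _.
    by apply: window; rewrite lexx andbT ler1n.
  by apply: C_ge; rewrite ?addr_ge0 ?mulr_ge0 ?sqrtr_ge0 ?le_max ?lexx ?lerDl //.
case: (lerP (T%:R * Num.sqrt L) P) => [large|P_lt].
  apply: le_trans
    (tradeoff_large_path TR_gt0 L_ge1 g_ge0 A_ge0 A_le P_le W_ge0 W_cube large _) _.
    by have := window 1; rewrite sqrtr1 divr1 mul1r; apply; rewrite lexx ler1n.
  by apply: C_ge; rewrite ?addr_ge0 ?mulr_ge0 ?le_max ?lexx ?orbT ?lerD2r ?lerDl.
apply: le_trans
  (tradeoff_balanced TR_gt0 _ P_ge0 g_ge0 A_ge0 A_le W_ge0 W_cube L_lt P_lt window) _.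
  exact: lt_le_trans ltr01 L_ge1.
by apply: C_ge; rewrite ?addr_ge0 ?mulr_ge0 ?le_max ?lexx ?orbT ?lerDl.
Qed.

Lemma path_len_le_diam (R : realType) d (Om : set 'rV[R]_d) (D : R)
    (u : nat -> 'rV[R]_d) T :
  oco_diam_le Om D -> (forall t, (1 <= t <= T)%N -> Om (u t)) ->
  path_len u 1 T <= D * (T - 1)%:R.
Proof.
move=> diam u_in; rewrite mulr_natr -sumr_const_nat.
by apply: ler_sum_nat => j /andP[j1 jT]; apply: diam; apply: u_in; lia.
Qed.

Lemma powR_thirds_cube (R : realType) (a b c : R) :
  0 <= a -> 0 <= b -> 0 <= c ->
  (a `^ (2 / 3) * b `^ (1 / 3) * c `^ (1 / 3)) ^+ 3 = a ^+ 2 * b * c.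
Proof.
have cube x r : 0 <= x -> (x `^ r) ^+ 3 = x `^ (r * 3).
  by move=> x_ge0; rewrite -powR_mulrn ?powR_ge0 // -powRrM.
move=> a_ge0 b_ge0 c_ge0; rewrite !exprMn !cube //.
have -> : (2 / 3 * 3 : R) = 2%:R by field.
have -> : (1 / 3 * 3 : R) = 1 by field.
by rewrite powR_mulrn ?powRr1.
Qed.

(* The 32 absorbs 8 sqrt(7 ln T + 5) <= 32 sqrt(ln T), valid once ln T >= 1. *)
Definition regret_const (R : realType) (D G : R) : R :=
  4 * (`|4 * D * G / (Num.sqrt 2 - 1)| + 32) + `|G| + `|G| * `|D|.

Lemma dynamic_regret_le_max (R : realType) (D G : R) d (Om : set 'rV[R]_d)
    (T : nat) (f : nat -> 'rV[R]_d -> R) (w u : nat -> 'rV[R]_d) :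
  expR 1 <= T%:R :> R -> oco_diam_le Om D ->
  (forall t, (1 <= t <= T)%N -> oco_lipschitz Om G (f t)) ->
  (forall tau : nat, (SAReg Om f w T tau <=
     ((4 * D * G / (Num.sqrt 2 - 1)
       + 8 * Num.sqrt (7 * ln (T%:R) + 5)) * Num.sqrt (tau%:R))%:E)%E) ->
  (forall t, (1 <= t <= T)%N -> Om (u t)) ->
  dyn_regret f w u T <=
    regret_const D G * Num.max (Num.sqrt (T%:R * ln (T%:R)))
      (T%:R `^ (2 / 3) * (path_len u 1 T) `^ (1 / 3) * (ln (T%:R)) `^ (1 / 3)).
Proof.
move=> T_ge diam f_lipschitz SAReg_le u_in.
set c := 4 * D * G / (Num.sqrt 2 - 1); set L := ln (T%:R : R).
set A := `|c| + 8 * Num.sqrt (7 * L + 5).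
set P := path_len u 1 T.
have L_ge1 : 1 <= L.
  by rewrite -[1](expRK 1) ler_ln ?posrE ?expR_gt0 // (lt_le_trans (expR_gt0 1)).
have T_gt0 : (0 < T)%N by rewrite -(ltr0n R) (lt_le_trans (expR_gt0 1)).
have A_ge0 : 0 <= A by rewrite addr_ge0 ?mulr_ge0 ?sqrtr_ge0.
have A_le : A <= (`|c| + 32) * Num.sqrt L.
  have sqrtL_ge1 : 1 <= Num.sqrt L by rewrite -sqrtr1 ler_sqrt // (le_trans ler01).
  have : Num.sqrt (7 * L + 5) <= 4 * Num.sqrt L.
    rewrite -[4](@ger0_norm _ 4) // -sqrtr_sqr -sqrtrM ?sqr_ge0 // ler_sqrt; nra.
  have := normr_ge0 c; rewrite /A mulrDl; nra.
have P_ge0 : 0 <= P := path_len_ge0 u 1 T.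
have P_le : P <= `|D| * T%:R.
  apply: (le_trans (path_len_le_diam diam u_in)).
  apply: le_trans (ler_wpM2r (ler0n _ _) (ler_norm D)) _.
  by apply: ler_wpM2l; rewrite ?normr_ge0 ?ler_nat ?leq_subr.
apply: (regret_tradeoff T_gt0 L_ge1 P_ge0 P_le (normr_ge0 G) A_ge0 A_le).
- by rewrite !mulr_ge0 ?powR_ge0.
- by rewrite powR_thirds_cube ?ler0n // (le_trans ler01 L_ge1).
move=> tau tau_gt0.
apply: (dynamic_regret_le_uniform f_lipschitz u_in A_ge0 _ T_gt0 tau_gt0).
move=> m; apply: le_trans (SAReg_le m) _; rewrite lee_fin.
by apply: ler_wpM2r; rewrite ?sqrtr_ge0 ?lerD2r ?ler_norm.
Qed.

Theorem theorem1 (R : realType) :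
  (* Part 1: dynamic regret bound via any partition into intervals *)
  (forall (d : nat) (Om : set 'rV[R]_d) (G : R) (T : nat)
     (f : nat -> 'rV[R]_d -> R) (w u : nat -> 'rV[R]_d),
     oco_convex_set Om ->
     (forall t, (1 <= t <= T)%N -> Om (w t)) ->
     (forall t, (1 <= t <= T)%N -> oco_convex_fun Om (f t)) ->
     (forall t, (1 <= t <= T)%N -> oco_lipschitz Om G (f t)) ->
     (forall t, (1 <= t <= T)%N -> Om (u t)) ->
     forall (k : nat) (s : nat -> nat), interval_partition T k s ->
       ((dyn_regret f w u T)%:E <=
        \sum_(i < k) (SAReg Om f w T (s i.+1 - s i)
                      + (G * (s i.+1 - s i)%:R
                           * path_len u (s i) (s i.+1).-1)%:E))%E)
  /\
  (* Part 2: O(max{sqrt(T log T), T^(2/3) P_T^(1/3) log^(1/3) T}) *)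
  (forall D G : R, exists C T0 : R, forall (d : nat) (Om : set 'rV[R]_d)
     (T : nat) (f : nat -> 'rV[R]_d -> R) (w u : nat -> 'rV[R]_d),
     T0 <= T%:R ->
     oco_convex_set Om ->
     oco_diam_le Om D ->
     (forall t, (1 <= t <= T)%N -> Om (w t)) ->
     (forall t, (1 <= t <= T)%N -> oco_convex_fun Om (f t)) ->
     (forall t, (1 <= t <= T)%N -> oco_lipschitz Om G (f t)) ->
     (forall tau : nat, (SAReg Om f w T tau <=
        ((4 * D * G / (Num.sqrt 2 - 1)
          + 8 * Num.sqrt (7 * ln (T%:R) + 5)) * Num.sqrt (tau%:R))%:E)%E) ->
     (forall t, (1 <= t <= T)%N -> Om (u t)) ->
     dyn_regret f w u T <=
       C * Num.max (Num.sqrt (T%:R * ln (T%:R)))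
                   (T%:R `^ (2 / 3) * (path_len u 1 T) `^ (1 / 3)
                      * (ln (T%:R)) `^ (1 / 3))).
Proof.
split.
  move=> d Om G T f w u _ _ _ f_lipschitz u_in k s part.
  exact: (dynamic_regret_le_partition w f_lipschitz u_in part).
move=> D G; exists (regret_const D G), (expR 1).
move=> d Om T f w u T_ge _ diam _ _ f_lipschitz SAReg_le u_in.
exact: (dynamic_regret_le_max T_ge diam f_lipschitz SAReg_le u_in).
Qed.
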